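(* Let $\Gamma$ be a countable group and $c\in\mathrm Z^2(\Gamma,\mathbb R)$. For $r\in\mathbb R$ let $c_r=\exp(irc)\in\mathrm Z^2(\Gamma,\mathbb T)$. If $c_r\in\mathrm B^2(\Gamma,\mathbb T)$ for every $r\in\mathbb R$, then $c\in\mathrm B^2(\Gamma,\mathbb R)$.
   Context: $\mathbb R$ and $\mathbb T$ carry the trivial $\Gamma$-action; $\mathrm Z^2$ and $\mathrm B^2$ denote group 2-cocycles ($c(g,h)+c(gh,k)=c(g,hk)+c(h,k)$) and 2-coboundaries ($c(g,h)=b(g)+b(h)-b(gh)$, multiplicatively for $\mathbb T$). *)

From Stdlib Require Import Reals.
From Coquelicot Require Import Coquelicot.
Open Scope R_scope.

Definition is_group {G : Type} (mul : G -> G -> G) (e : G) (inv : G -> G) : Prop :=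
  (forall x y z, mul (mul x y) z = mul x (mul y z)) /\
  (forall x, mul e x = x) /\ (forall x, mul x e = x) /\
  (forall x, mul (inv x) x = e) /\ (forall x, mul x (inv x) = e).

Definition countable (G : Type) : Prop :=
  exists f : G -> nat, forall x y, f x = f y -> x = y.

Definition cocycle2_R {G : Type} (mul : G -> G -> G) (c : G -> G -> R) : Prop :=
  forall g h k, c g h + c (mul g h) k = c g (mul h k) + c h k.

Definition coboundary2_R {G : Type} (mul : G -> G -> G) (c : G -> G -> R) : Prop :=
  exists b : G -> R, forall g h, c g h = b g + b h - b (mul g h).

Definition in_T (z : C) : Prop := Cmod z = 1.

Definition coboundary2_T {G : Type} (mul : G -> G -> G) (c : G -> G -> C) : Prop :=
  exists b : G -> C, (forall g, in_T (b g)) /\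
    forall g h, c g h = Cmult (Cmult (b g) (b h)) (Cinv (b (mul g h))).

Definition expi (x : R) : C := (cos x, sin x).

Definition c_r {G : Type} (r : R) (c : G -> G -> R) : G -> G -> C :=
  fun g h => expi (r * c g h).

(** A real function c on Γ×Γ is a coboundary iff its linear extension to ℤ[Γ×Γ]
    factors through the boundary ∂(g,h) = g + h - gh into ℤ[Γ].  If ∂x = 0 then
    exp(i r c(x)) = 1 for every r, because exp(i r c) is a coboundary; so r·c(x) ∈ 2πℤ
    for all r, which forces c(x) = 0.  Hence x ↦ c(x) induces a homomorphism on the
    subgroup ∂ℤ[Γ×Γ] of the free abelian group ℤ[Γ], and since ℝ is divisible it
    extends to all of ℤ[Γ]; for countable Γ the extension is built one generator at a
    time. *)

From Stdlib Require Import Reals Lra Lia List ClassicalEpsilon.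
From Coquelicot Require Import Coquelicot.
Open Scope R_scope.

(* An element of the free abelian group on [A]; two lists represent the same element
   iff they are [fsum_equiv]. *)
Definition fsum (A : Type) := list (Z * A).

Fixpoint fsum_eval {A : Type} (phi : A -> R) (x : fsum A) : R :=
  match x with
  | nil => 0
  | (k, a) :: t => IZR k * phi a + fsum_eval phi t
  end.

Definition fsum_scale {A : Type} (k : Z) (x : fsum A) : fsum A :=
  map (fun p => (k * fst p, snd p)%Z) x.

Definition fsum_equiv {A : Type} (x y : fsum A) : Prop :=
  forall phi, fsum_eval phi x = fsum_eval phi y.

Definition supported_on {A : Type} (D : A -> Prop) (x : fsum A) : Prop :=
  List.Forall (fun p => D (snd p)) x.

Lemma fsum_eval_app {A : Type} (phi : A -> R) (x y : fsum A) :
  fsum_eval phi (x ++ y) = fsum_eval phi x + fsum_eval phi y.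
Proof. induction x as [|[k a] t IH]; simpl; [|rewrite IH]; ring. Qed.

Lemma fsum_eval_scale {A : Type} (phi : A -> R) (k : Z) (x : fsum A) :
  fsum_eval phi (fsum_scale k x) = IZR k * fsum_eval phi x.
Proof. induction x as [|[l a] t IH]; simpl; [|rewrite IH, mult_IZR]; ring. Qed.

Lemma fsum_eval_mulr {A : Type} (phi : A -> R) (r : R) (x : fsum A) :
  fsum_eval (fun a => r * phi a) x = r * fsum_eval phi x.
Proof. induction x as [|[k a] t IH]; simpl; [|rewrite IH]; ring. Qed.

Lemma fsum_eval_agree {A : Type} (D : A -> Prop) (phi psi : A -> R) (x : fsum A) :
  supported_on D x -> (forall a, D a -> phi a = psi a) ->
  fsum_eval phi x = fsum_eval psi x.
Proof.
  intros Hx Hagree; induction Hx as [|[k a] t Ha _ IH]; simpl; [reflexivity|].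
  rewrite IH, (Hagree a Ha); reflexivity.
Qed.

Lemma supported_on_scale {A : Type} (D : A -> Prop) (k : Z) (x : fsum A) :
  supported_on D x -> supported_on D (fsum_scale k x).
Proof. unfold supported_on, fsum_scale; rewrite List.Forall_map; exact (fun H => H). Qed.

Lemma supported_on_split {A : Type} (D : A -> Prop) (a : A) (x : fsum A) :
  supported_on (fun b => D b \/ b = a) x ->
  exists y k, supported_on D y /\ fsum_equiv x (y ++ (k, a) :: nil).
Proof.
  intros Hx; induction Hx as [|[k b] t Hb _ [y [l [Hy Heq]]]].
  - exists nil, 0%Z; split; [constructor | intros phi; simpl; ring].
  - simpl in Hb; destruct Hb as [Hb | ->].
    + exists ((k, b) :: y), l; split; [constructor; assumption|].
      intros phi; simpl; rewrite Heq; reflexivity.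
    + exists y, (k + l)%Z; split; [assumption|].
      intros phi; simpl; rewrite Heq, !fsum_eval_app; simpl; rewrite plus_IZR; ring.
Qed.

Lemma supported_on_bounded {A : Type} (f : A -> nat) (x : fsum A) :
  exists N, supported_on (fun a => (f a < N)%nat) x.
Proof.
  induction x as [|[k a] t [N HN]]; [exists O; constructor|].
  exists (S (Nat.max N (f a))); constructor; simpl; [lia|].
  eapply List.Forall_impl; [|exact HN]; simpl; intros; lia.
Qed.

Section PartialHomExtension.

Variables (Y : Type) (P : fsum Y -> R -> Prop).

Hypothesis P_lincomb : forall k k' n n' v v', P n v -> P n' v' ->
  P (fsum_scale k n ++ fsum_scale k' n') (IZR k * v + IZR k' * v').
Hypothesis P_cycle : forall n v, P n v -> fsum_equiv n nil -> v = 0.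

Definition solves_on (D : Y -> Prop) (b : Y -> R) : Prop :=
  forall n v m, P n v -> supported_on D m -> fsum_equiv n m -> fsum_eval b m = v.

Lemma solves_on_empty (b : Y -> R) : solves_on (fun _ => False) b.
Proof.
  intros n v [|p m] Hn Hm Heq.
  - symmetry; exact (P_cycle n v Hn Heq).
  - destruct (List.Forall_inv Hm).
Qed.

Lemma solves_on_weaken (D D' : Y -> Prop) (b b' : Y -> R) :
  solves_on D b -> (forall y, D' y -> D y) -> (forall y, D' y -> b' y = b y) ->
  solves_on D' b'.
Proof.
  intros Hb HD Hagree n v m Hn Hm Heq.
  rewrite (fsum_eval_agree D' b' b m Hm Hagree).
  apply (Hb n v m Hn); [|exact Heq].
  eapply List.Forall_impl; [|exact Hm]; intros p; apply HD.
Qed.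

(* If some relation [P n0 w] has [n0 = n0D + k0 g] with [n0D] inside [D] and [k0 <> 0],
   the value at [g] is forced to be [(w - b n0D) / k0]; any other relation involving [g]
   differs from a multiple of this one by a relation inside [D]. *)
Lemma solves_on_add_point (D : Y -> Prop) (b : Y -> R) (g : Y) :
  solves_on D b ->
  exists v, forall b', (forall y, D y -> b' y = b y) -> b' g = v ->
    solves_on (fun y => D y \/ y = g) b'.
Proof.
  intros Hb.
  destruct (classic (exists n0 w n0D k0, P n0 w /\ supported_on D n0D /\ k0 <> 0%Z /\
                       fsum_equiv n0 (n0D ++ (k0, g) :: nil)))
    as [[n0 [w [n0D [k0 [Hn0 [Hn0D [Hk0 Heq0]]]]]]] | Hnone].
  - exists ((w - fsum_eval b n0D) / IZR k0).
    intros b' Hagree Hg n v m Hn Hm Heq.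
    destruct (supported_on_split D g m Hm) as [mD [k [HmD Hsplit]]].
    assert (Hcomb : fsum_eval b (fsum_scale k0 mD ++ fsum_scale (- k) n0D)
                    = IZR k0 * v + IZR (- k) * w).
    { apply (Hb _ _ _ (P_lincomb k0 (- k) n n0 v w Hn Hn0)).
      - apply List.Forall_app; split; apply supported_on_scale; assumption.
      - intros phi.
        rewrite !fsum_eval_app, !fsum_eval_scale, Heq, Hsplit, Heq0, !fsum_eval_app.
        simpl; rewrite opp_IZR; ring. }
    rewrite fsum_eval_app, !fsum_eval_scale, opp_IZR in Hcomb.
    assert (Hk0R : IZR k0 <> 0) by (apply not_0_IZR; exact Hk0).
    rewrite (Hsplit b'), fsum_eval_app, (fsum_eval_agree D b' b mD HmD Hagree).
    simpl; rewrite Hg.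
    apply (Rmult_eq_reg_l (IZR k0)); [|exact Hk0R].
    replace (IZR k0 * (fsum_eval b mD + (IZR k * ((w - fsum_eval b n0D) / IZR k0) + 0)))
      with (IZR k0 * fsum_eval b mD - IZR k * fsum_eval b n0D + IZR k * w)
      by (field; exact Hk0R).
    lra.
  - exists 0. intros b' Hagree _ n v m Hn Hm Heq.
    destruct (supported_on_split D g m Hm) as [mD [k [HmD Hsplit]]].
    destruct (Z.eq_dec k 0) as [-> | Hk].
    + rewrite (Hsplit b'), fsum_eval_app, (fsum_eval_agree D b' b mD HmD Hagree).
      simpl; rewrite Rmult_0_l, !Rplus_0_r.
      apply (Hb n v mD Hn HmD).
      intros phi; rewrite Heq, Hsplit, fsum_eval_app; simpl; ring.
    + exfalso; apply Hnone; exists n, v, mD, k.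
      repeat split; try assumption.
      intros phi; rewrite Heq; apply Hsplit.
Qed.

Variable f : Y -> nat.
Hypothesis f_inj : forall y z, f y = f z -> y = z.

Definition extension_value (D : Y -> Prop) (b : Y -> R) (g : Y) : R :=
  epsilon (inhabits 0) (fun v => forall b', (forall y, D y -> b' y = b y) -> b' g = v ->
                                   solves_on (fun y => D y \/ y = g) b').

Lemma extension_value_spec (D : Y -> Prop) (b b' : Y -> R) (g : Y) :
  solves_on D b -> (forall y, D y -> b' y = b y) -> b' g = extension_value D b g ->
  solves_on (fun y => D y \/ y = g) b'.
Proof. intros Hb; exact (epsilon_spec _ _ (solves_on_add_point D b g Hb) b'). Qed.

Fixpoint approx (N : nat) : Y -> R :=
  match N with
  | O => fun _ => 0
  | S M => fun y => if Nat.eqb (f y) M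
                    then extension_value (fun z => (f z < M)%nat) (approx M) y
                    else approx M y
  end.

Lemma approx_solves (N : nat) : solves_on (fun y => (f y < N)%nat) (approx N).
Proof.
  induction N as [|N IH].
  - apply (solves_on_weaken _ _ _ _ (solves_on_empty (approx 0))); intros y Hy; lia.
  - assert (Hagree : forall y, (f y < N)%nat -> approx (S N) y = approx N y).
    { intros y Hy; simpl; destruct (Nat.eqb_spec (f y) N); [lia | reflexivity]. }
    destruct (classic (exists g, f g = N)) as [[g Hg] | Hnone].
    + apply (solves_on_weaken (fun y => (f y < N)%nat \/ y = g) _ (approx (S N))).
      * apply (extension_value_spec _ _ _ g IH Hagree).
        simpl; rewrite Hg, Nat.eqb_refl; reflexivity.
      * intros y Hy; destruct (Nat.eq_dec (f y) N); [right; apply f_inj | left]; lia.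
      * reflexivity.
    + assert (HD : forall y, (f y < S N)%nat -> (f y < N)%nat).
      { intros y Hy; destruct (Nat.eq_dec (f y) N); [exfalso; eauto | lia]. }
      apply (solves_on_weaken _ _ _ _ IH HD); intros y Hy; exact (Hagree y (HD y Hy)).
Qed.

Lemma approx_stable (y : Y) (M : nat) : (f y < M)%nat -> approx M y = approx (S (f y)) y.
Proof.
  induction M as [|M IH]; intros Hy; [lia|].
  destruct (Nat.eq_dec (f y) M) as [<- | Hne]; [reflexivity|].
  simpl; destruct (Nat.eqb_spec (f y) M); [lia|].
  apply IH; lia.
Qed.

Theorem partial_hom_extends : exists b : Y -> R, forall n v, P n v -> fsum_eval b n = v.
Proof.
  exists (fun y => approx (S (f y)) y).
  intros n v Hn.
  destruct (supported_on_bounded f n) as [N HN].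
  rewrite <- (fsum_eval_agree _ (approx N) _ n HN) by (intros y; apply approx_stable).
  exact (approx_solves N n v n Hn HN (fun _ => eq_refl)).
Qed.

End PartialHomExtension.

Lemma expi_add (a b : R) : Cmult (expi a) (expi b) = expi (a + b).
Proof. unfold expi, Cmult; simpl; rewrite cos_plus, sin_plus; f_equal; ring. Qed.

Lemma Cinv_expi (a : R) : Cinv (expi a) = expi (- a).
Proof.
  unfold expi, Cinv; simpl; rewrite cos_neg, sin_neg.
  pose proof (sin2_cos2 a) as H; unfold Rsqr in H.
  replace (cos a * (cos a * 1) + sin a * (sin a * 1)) with 1 by lra.
  f_equal; field.
Qed.

Lemma in_T_expi (z : C) : in_T z -> exists t, z = expi t.
Proof.
  destruct z as [a b]; unfold in_T, Cmod; cbn [fst snd]; intros H.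
  assert (Hs : a * a + b * b = 1).
  { assert (H0 : 0 <= a ^ 2 + b ^ 2) by nra.
    pose proof (sqrt_sqrt _ H0) as H1; rewrite H in H1; nra. }
  assert (Ha : -1 <= a <= 1) by nra.
  assert (Hb : sqrt (1 - Rsqr a) = Rabs b).
  { replace (1 - Rsqr a) with (Rsqr b) by (unfold Rsqr; lra); apply sqrt_Rsqr_abs. }
  destruct (Rle_or_lt 0 b) as [Hb0 | Hb0].
  - exists (acos a); unfold expi.
    rewrite cos_acos, sin_acos, Hb, Rabs_right by lra; reflexivity.
  - exists (- acos a); unfold expi.
    rewrite cos_neg, sin_neg, cos_acos, sin_acos, Hb, Rabs_left by lra.
    f_equal; ring.
Qed.

Lemma expi_eq_2PIZ (a b : R) : expi a = expi b -> exists k : Z, a = b + 2 * PI * IZR k.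
Proof.
  unfold expi; intros H; injection H as Hcos Hsin.
  assert (Hc : cos (a - b) = 1).
  { rewrite cos_minus, Hcos, Hsin; pose proof (sin2_cos2 b) as E; unfold Rsqr in E; lra. }
  assert (Hs : sin ((a - b) / 2) = 0).
  { pose proof (cos_2a_sin ((a - b) / 2)) as E.
    replace (2 * ((a - b) / 2)) with (a - b) in E by field.
    rewrite Hc in E; nra. }
  destruct (sin_eq_0_0 _ Hs) as [k Hk]; exists k; lra.
Qed.

Lemma fsum_eval_mod_2PIZ {A : Type} (phi psi : A -> R) :
  (forall a, exists k : Z, phi a = psi a + 2 * PI * IZR k) ->
  forall x, exists k : Z, fsum_eval phi x = fsum_eval psi x + 2 * PI * IZR k.
Proof.
  intros Hphi x; induction x as [|[l a] t [k IH]]; [exists 0%Z; simpl; ring|].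
  destruct (Hphi a) as [m Hm].
  exists (l * m + k)%Z; simpl; rewrite Hm, IH, plus_IZR, mult_IZR; ring.
Qed.

Lemma eq0_of_multiples_in_2PIZ (v : R) :
  (forall r, exists k : Z, r * v = 2 * PI * IZR k) -> v = 0.
Proof.
  intros Hv; destruct (Req_dec v 0) as [|Hv0]; [assumption|].
  destruct (Hv (PI / v)) as [k Hk].
  replace (PI / v * v) with PI in Hk by (field; exact Hv0).
  assert (H2k : IZR (2 * k) = IZR 1).
  { rewrite mult_IZR; pose proof PI_RGT_0; nra. }
  apply eq_IZR in H2k; lia.
Qed.

Definition coboundary_of {G : Type} (mul : G -> G -> G) (phi : G -> R) (p : G * G) : R :=
  phi (fst p) + phi (snd p) - phi (mul (fst p) (snd p)).

Lemma coboundary2_T_phase {G : Type} (mul : G -> G -> G) (c : G -> G -> R) (r : R) :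
  coboundary2_T mul (c_r r c) ->
  exists theta, forall p, exists k : Z,
    r * uncurry c p = coboundary_of mul theta p + 2 * PI * IZR k.
Proof.
  intros [beta [Hbeta Hc]].
  destruct (choice (fun g t => beta g = expi t) (fun g => in_T_expi _ (Hbeta g)))
    as [theta Htheta].
  exists theta; intros [g h]; apply expi_eq_2PIZ.
  pose proof (Hc g h) as E; unfold c_r in E; simpl.
  rewrite E, !Htheta, Cinv_expi, !expi_add.
  unfold coboundary_of; simpl; f_equal; ring.
Qed.

Definition boundary_graph {G : Type} (mul : G -> G -> G) (c : G -> G -> R)
  (n : fsum G) (v : R) : Prop :=
  exists x : fsum (G * G),
    (forall phi, fsum_eval (coboundary_of mul phi) x = fsum_eval phi n) /\
    fsum_eval (uncurry c) x = v.

Lemma boundary_graph_lincomb {G : Type} (mul : G -> G -> G) (c : G -> G -> R) k k' n n' v v' :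
  boundary_graph mul c n v -> boundary_graph mul c n' v' ->
  boundary_graph mul c (fsum_scale k n ++ fsum_scale k' n') (IZR k * v + IZR k' * v').
Proof.
  intros [x [Hx <-]] [x' [Hx' <-]].
  exists (fsum_scale k x ++ fsum_scale k' x'); split.
  - intros phi; rewrite !fsum_eval_app, !fsum_eval_scale, Hx, Hx'; reflexivity.
  - rewrite fsum_eval_app, !fsum_eval_scale; reflexivity.
Qed.

Lemma boundary_graph_cycle {G : Type} (mul : G -> G -> G) (c : G -> G -> R) :
  (forall r, coboundary2_T mul (c_r r c)) ->
  forall n v, boundary_graph mul c n v -> fsum_equiv n nil -> v = 0.
Proof.
  intros Hr n v [x [Hx <-]] Hn.
  apply eq0_of_multiples_in_2PIZ; intros r.
  destruct (coboundary2_T_phase mul c r (Hr r)) as [theta Htheta].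
  destruct (fsum_eval_mod_2PIZ _ _ Htheta x) as [k Hk].
  exists k; rewrite <- fsum_eval_mulr, Hk, Hx, Hn; simpl; ring.
Qed.

Theorem corollary6p2 (G : Type) (mul : G -> G -> G) (e : G) (inv : G -> G)
  (HG : is_group mul e inv) (Hcount : countable G)
  (c : G -> G -> R) (Hc : cocycle2_R mul c)
  (Hr : forall r : R, coboundary2_T mul (c_r r c)) :
  coboundary2_R mul c.
Proof.
  destruct Hcount as [f Hf].
  destruct (partial_hom_extends G (boundary_graph mul c) (boundary_graph_lincomb mul c)
              (boundary_graph_cycle mul c Hr) f Hf) as [b Hb].
  exists b; intros g h.
  assert (Hgh : boundary_graph mul c ((1, g) :: (1, h) :: (-1, mul g h) :: nil)%Z (c g h)).
  { exists ((1, (g, h)) :: nil)%Z; split.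
    - intros phi; unfold coboundary_of; simpl; ring.
    - simpl; ring. }
  pose proof (Hb _ _ Hgh) as E; simpl in E; lra.
Qed.
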